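(* For each basis structure $(L,T,U,\bar e)$ of the transformed problem whose basic solution $x$ is feasible, it holds that $x_e\notin\mathbb{N}_{\ge0}$ for all edges $e$ of the cycle $C(\bar e)$.
   Context: Problem: directed multigraph $G=(V,E)$, capacities $u_e\in\mathbb{N}_{\ge0}$, costs $c_e\in\mathbb{Z}$, usage fees $b_e\in\mathbb{N}_{\ge0}$, budget $B\in\mathbb{N}_{\ge0}$; a feasible flow is $x\in\mathbb{R}^E$ with flow conservation at every node and $0\le x\le u$; $b(x)=\sum_eb_ex_e$. The transformed problem replaces the budget $B$ by $B'=B+\tfrac12$. A basis structure is a tuple $(L,T,U,\bar e)$, $\bar e\in E$, $L,T,U$ a partition of $E\setminus\{\bar e\}$, $T$ a spanning tree of the underlying undirected graph, such that the unique cycle $C(\bar e)$ in $T\cup\{\bar e\}$ (oriented along $\bar e$, with forward edges $C^+$ and backward edges $C^-$) has $\sum_{C^+}b-\sum_{C^-}b\neq0$. Its basic solution for the transformed problem is the unique $x$ with flow conservation at every node, $x=0$ on $L$, $x=u$ on $U$, and $b(x)=B'$; it is feasible if $0\le x\le u$. *)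

From mathcomp Require Import all_boot all_order all_algebra.
Set Implicit Arguments. Unset Strict Implicit. Unset Printing Implicit Defensive.
Import Order.TTheory GRing.Theory Num.Theory.

(* Walks in the underlying undirected graph are sequences of steps
   (e, true) = traverse e forwards (src e -> dst e), (e, false) = backwards. *)
Section Graph.
Variables (V E : finType) (src dst : E -> V).

Definition step_tail (s : E * bool) : V := if s.2 then src s.1 else dst s.1.
Definition step_head (s : E * bool) : V := if s.2 then dst s.1 else src s.1.

Fixpoint walk (v : V) (w : seq (E * bool)) (t : V) : bool :=
  match w with
  | [::] => v == t
  | s :: w' => (step_tail s == v) && walk (step_head s) w' t
  end.

Definition edges_in (F : {set E}) (w : seq (E * bool)) : bool :=
  all (fun s => s.1 \in F) w.

Definition uconnected (F : {set E}) : Prop :=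
  forall x y : V, exists w, edges_in F w && walk x w y.

Definition ucycle_in (F : {set E}) (w : seq (E * bool)) : Prop :=
  [/\ w != [::], edges_in F w, (exists v, walk v w v),
      uniq (map fst w) & uniq (map step_tail w)].

Definition uacyclic (F : {set E}) : Prop := forall w, ~ ucycle_in F w.

Definition spanning_tree (T : {set E}) : Prop := uconnected T /\ uacyclic T.

(* c is the cycle C(ebar) of T + ebar, oriented along ebar.
   (It is unique up to rotation when T is a spanning tree.) *)
Definition fund_cycle (T : {set E}) (ebar : E) (c : seq (E * bool)) : Prop :=
  ucycle_in (ebar |: T) c /\ (ebar, true) \in c.

Definition cycle_fee (b : E -> nat) (c : seq (E * bool)) : int :=
  \sum_(s <- c) (if s.2 then (b s.1)%:Z else - (b s.1)%:Z).

Definition basis_structure (b : E -> nat) (L T U : {set E}) (ebar : E) : Prop :=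
  [/\ [&& [disjoint L & T], [disjoint L & U] & [disjoint T & U]],
      L :|: T :|: U = [set~ ebar],
      spanning_tree T &
      forall c, fund_cycle T ebar c -> cycle_fee b c != 0].

Local Open Scope ring_scope.

Definition flow_conservation (R : numDomainType) (x : E -> R) : Prop :=
  forall v : V, \sum_(e | dst e == v) x e = \sum_(e | src e == v) x e.

Definition fee (R : numDomainType) (b : E -> nat) (x : E -> R) : R :=
  \sum_(e : E) (b e)%:R * x e.

(* x is the basic solution of (L,T,U,ebar) for the transformed problem
   with budget B' = B + 1/2 *)
Definition basic_solution (R : numFieldType) (u b : E -> nat) (B : nat)
    (L U : {set E}) (x : E -> R) : Prop :=
  [/\ flow_conservation x,
      (forall e, e \in L -> x e = 0),
      (forall e, e \in U -> x e = (u e)%:R) &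
      fee b x = B%:R + 2^-1].

Definition feasible (R : numDomainType) (u : E -> nat) (x : E -> R) : Prop :=
  forall e, 0 <= x e <= (u e)%:R.

End Graph.

From HB Require Import structures.
From mathcomp Require Import all_boot all_order all_algebra.
From mathcomp Require Import zify ring boolp.
Import Order.TTheory GRing.Theory Num.Theory.
Set Implicit Arguments. Unset Strict Implicit. Unset Printing Implicit Defensive.

(* Put k := x_ebar and g := x - k chi, where chi is the unit circulation
   around C(ebar). Then g conserves flow and is integral off T: it vanishes on
   L and on ebar and equals u on U. In a conserved flow no vertex meets exactly
   one edge of non-integral flow, so the non-integral edges of g, if any,
   contain a cycle, which is impossible inside the tree T; hence g is integral.
   If x_e were an integer for an edge e of C(ebar), then k = +-(x_e - g_e)
   would be one too, so x = g + k chi would be integral and so would b(x),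
   contradicting b(x) = B + 1/2. *)

Section Walks.
Variables (V E : finType) (src dst : E -> V).
Local Notation walk := (walk src dst).
Local Notation st := (step_tail src dst).
Local Notation sh := (step_head src dst).

Definition incident (f : E) (v : V) := (src f == v) || (dst f == v).

Lemma incident_step (s : E * bool) v : incident s.1 v = (st s == v) || (sh s == v).
Proof. by case: s => e [] //=; rewrite /incident orbC. Qed.

Lemma walk_last a p b : walk a p b -> last a (map sh p) = b.
Proof. by elim: p a => [|s p IH] a /=; [move/eqP | case/andP=> _ /IH]. Qed.

Lemma walk_cat a p b q c : walk a p b -> walk b q c -> walk a (p ++ q) c.
Proof.
elim: p a => [|s p IH] a /=; first by move/eqP->.
by case/andP=> -> /IH H /H.
Qed.

Lemma walk_catl a p q c : walk a (p ++ q) c -> walk a p (last a (map sh p)).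
Proof.
elim: p a => [|s p IH] a /=; first by rewrite eqxx.
by case/andP=> -> /IH.
Qed.

Lemma walk_rcons a p s : walk a p (st s) -> walk a (rcons p s) (sh s).
Proof. by move=> W; rewrite -cats1 (walk_cat W) //= !eqxx. Qed.

Lemma walk_tails a p b : walk a p b -> map st p = belast a (map sh p).
Proof. by elim: p a => //= s p IH a /andP[/eqP-> /IH->]. Qed.

Lemma walk_ends a p b s : walk a p b -> s \in p ->
  (st s \in a :: map sh p) && (sh s \in a :: map sh p).
Proof.
move=> W sp; apply/andP; split; last by rewrite inE map_f ?orbT.
by apply: mem_belast; rewrite -(walk_tails W) map_f.
Qed.

Lemma walk_split a p b w : walk a p b -> w \in a :: map sh p ->
  exists p1 p2, [/\ p = p1 ++ p2, walk a p1 w & walk w p2 b].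
Proof.
elim: p a => [|s p IH] a /=.
  by rewrite inE => W /eqP->; exists [::], [::]; rewrite /= eqxx.
case/andP=> s_at W; rewrite inE => /predU1P[->|/(IH _ W)[p1 [p2 [-> W1 W2]]]].
  by exists [::], (s :: p); rewrite /= eqxx s_at.
by exists (s :: p1), p2; rewrite /= s_at W1.
Qed.

Lemma walk_uniq_edges a p b : walk a p b -> uniq (a :: map sh p) -> uniq (map fst p).
Proof.
elim: p a => //= s p IH a /andP[/eqP s_at W] /andP[a_notin p_uniq].
rewrite (IH _ W p_uniq) andbT; apply/mapP => -[s' s'p Es].
have /andP[st_in sh_in] := walk_ends W s'p.
have : incident s'.1 a by rewrite -Es incident_step s_at eqxx.
by rewrite incident_step => /orP[]/eqP E'; move: a_notin; rewrite -E' ?st_in ?sh_in.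
Qed.

Definition simple_path (F : {set E}) (a : V) (p : seq (E * bool)) :=
  [&& walk a p (last a (map sh p)), edges_in F p & uniq (a :: map sh p)].

Lemma simple_path_size F a p : simple_path F a p -> size p < #|V|.
Proof. by case/and3P=> _ _ /card_uniqP; rewrite /= size_map => <-; apply: max_card. Qed.

Lemma ucycle_in_subset (F F' : {set E}) w :
  {subset F <= F'} -> ucycle_in src dst F w -> ucycle_in src dst F' w.
Proof. by move=> sFF' [? F_w ? ? ?]; split=> //; apply: sub_all F_w => s /sFF'. Qed.

Lemma loop_ucycle (F : {set E}) f : f \in F -> src f = dst f ->
  exists w, ucycle_in src dst F w.
Proof.
move=> Ff loop_f; exists [:: (f, true)]; split=> //=; first by rewrite Ff.
by exists (src f); rewrite /step_tail /step_head /= loop_f !eqxx.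
Qed.

(* The cycle is the part of the path after the vertex [sh s], followed by [s]. *)
Lemma close_ucycle (F : {set E}) a p sk s :
  simple_path F a (rcons p sk) -> s.1 \in F -> s.1 != sk.1 ->
  st s = sh sk -> sh s != st s -> sh s \in a :: map sh (rcons p sk) ->
  exists w, ucycle_in src dst F w.
Proof.
rewrite /simple_path map_rcons last_rcons -map_rcons => /and3P[W EF U].
move=> Fs s_new st_s sh_s /(walk_split W)[p1 [p2 [Ep W1 W2]]].
case/lastP: p2 Ep W2 => [|p3 s3] Ep W2; first by rewrite st_s (eqP W2) eqxx in sh_s.
move: Ep; rewrite -rcons_cat => /rcons_inj[Ep3 Es3]; subst s3.
have U3 : uniq (sh s :: map sh (rcons p3 sk)).
  move: U; rewrite Ep3 rcons_cat map_cat -cat_cons cat_uniq => /and3P[_ disj p3_uniq].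
  rewrite cons_uniq p3_uniq andbT; apply: contra disj => sh_in.
  apply/hasP; exists (sh s) => //.
  by rewrite -(walk_last W1) mem_last.
have Wc : walk (sh s) (rcons (rcons p3 sk) s) (sh s) by apply: walk_rcons; rewrite st_s.
exists (rcons (rcons p3 sk) s); split.
- by rewrite -size_eq0 size_rcons.
- by move: EF; rewrite /edges_in Ep3 rcons_cat all_cat !all_rcons Fs => /and3P[_ -> ->].
- by exists (sh s).
- rewrite map_rcons rcons_uniq (walk_uniq_edges W2 U3) andbT.
  rewrite map_rcons mem_rcons inE negb_or s_new /=; apply/mapP => -[s' s'p Es].
  have W3 : walk (sh s) p3 (last (sh s) (map sh p3)).
    by apply: (@walk_catl _ _ [:: sk] (sh sk)); rewrite cats1.
  have /andP[st_in sh_in] := walk_ends W3 s'p.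
  move: U3; rewrite map_rcons -rcons_cons rcons_uniq -st_s => /andP[st_notin _].
  have : incident s'.1 (st s) by rewrite -Es incident_step eqxx.
  by rewrite incident_step => /orP[]/eqP E'; move: st_notin; rewrite -E' ?st_in ?sh_in.
- by rewrite (walk_tails Wc) map_rcons belast_rcons.
Qed.

Section ForcedCycle.
Variable F : {set E}.
Hypothesis F_loopless : forall f, f \in F -> src f != dst f.
Hypothesis F_branching : forall v e, e \in F -> incident e v ->
  exists f, [/\ f \in F, f != e & incident f v].

Lemma extend_simple_path a p sk : simple_path F a (rcons p sk) ->
  (exists w, ucycle_in src dst F w) \/
  exists s, simple_path F a (rcons (rcons p sk) s).
Proof.
move=> P; have /and3P[W EF U] := P.
have Fsk : sk.1 \in F by move: EF; rewrite /edges_in all_rcons => /andP[].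
have sk_at : incident sk.1 (sh sk) by rewrite incident_step eqxx orbT.
have [f [Ff f_new f_at]] := F_branching Fsk sk_at.
pose s := (f, src f == sh sk).
have st_s : st s = sh sk.
  rewrite /s /step_tail /=; case: eqP => //= /eqP src_f.
  by move: f_at; rewrite /incident (negbTE src_f) => /eqP.
have sh_s : sh s != st s.
  move: (F_loopless Ff); rewrite /step_tail /step_head /s /=.
  by case: ifP => _ //; rewrite eq_sym.
have [sh_in|sh_out] := boolP (sh s \in a :: map sh (rcons p sk)).
  by left; apply: (close_ucycle (s := s) P).
right; exists s; rewrite /simple_path !map_rcons !last_rcons -!map_rcons.
rewrite walk_rcons; last by move: W; rewrite map_rcons last_rcons st_s.
rewrite /edges_in all_rcons Ff.
by rewrite -/(edges_in F (rcons p sk)) EF map_rcons -rcons_cons rcons_uniq sh_out.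
Qed.

Lemma branching_ucycle : (exists e, e \in F) -> exists w, ucycle_in src dst F w.
Proof.
move=> [e Fe].
suff long_path k a p sk : #|V| - size p <= k ->
    simple_path F a (rcons p sk) -> exists w, ucycle_in src dst F w.
  apply: (long_path #|V| (src e) [::] (e, true)); first by rewrite leq_subr.
  by rewrite /simple_path /= !eqxx Fe inE F_loopless.
elim: k a p sk => [|k IH] a p sk p_bound /extend_simple_path[//|[s P]];
  have := simple_path_size P; rewrite !size_rcons => P_size; first lia.
by apply: (IH a (rcons p sk) s) => //; rewrite size_rcons; lia.
Qed.
End ForcedCycle.

Lemma find_ucycle (F : {set E}) : (exists e, e \in F) ->
  (forall v e, e \in F -> src e != dst e -> incident e v ->
     exists f, [/\ f \in F, f != e & incident f v]) ->
  exists w, ucycle_in src dst F w.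
Proof.
move=> F_nonempty F_branching.
have [/existsP[f /andP[Ff /eqP loop_f]]|no_loop] :=
  boolP [exists f, (f \in F) && (src f == dst f)]; first exact: loop_ucycle Ff loop_f.
have F_loopless f : f \in F -> src f != dst f.
  by move=> Ff; apply: contraNN no_loop => loop_f; apply/existsP; exists f; rewrite Ff.
by apply: branching_ucycle => // v e Fe; apply: F_branching => //; apply: F_loopless.
Qed.
End Walks.

Local Open Scope ring_scope.

Section IntegerElements.
Context {R : pzRingType}.

Definition Rint : {pred R} := fun r => `[< exists z : int, r = z%:~R >].

Lemma RintP r : reflect (exists z : int, r = z%:~R) (r \in Rint).
Proof. exact: asboolP. Qed.

Fact Rint_subring_closed : subring_closed Rint.
Proof.
split=> [|_ _ /RintP[x ->] /RintP[y ->]|_ _ /RintP[x ->] /RintP[y ->]].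
- by apply/RintP; exists 1.
- by apply/RintP; exists (x - y); rewrite intrB.
- by apply/RintP; exists (x * y); rewrite intrM.
Qed.

HB.instance Definition _ := GRing.isSubringClosed.Build R Rint Rint_subring_closed.

End IntegerElements.

Lemma half_Rint (R : numFieldType) : (2^-1 : R) \notin Rint.
Proof.
apply/RintP => -[z half_z].
have : (2 * z)%:~R = 1 :> R by rewrite intrM -half_z mulfV ?pnatr_eq0.
by move/(intr_inj (x2 := 1)); lia.
Qed.

Section Circulations.
Context {R : numFieldType} {V E : finType} (src dst : E -> V).
Local Notation flow_conservation := (@flow_conservation V E src dst R).

Lemma flow_conservationB_scale (x y : E -> R) k :
  flow_conservation x -> flow_conservation y ->
  flow_conservation (fun e => x e - k * y e).
Proof. by move=> Cx Cy v; rewrite !sumrB -!mulr_sumr Cx Cy. Qed.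

Definition step_sign (s : E * bool) : R := if s.2 then 1 else -1.

Definition cycle_flow (c : seq (E * bool)) (e : E) : R :=
  \sum_(s <- c | s.1 == e) step_sign s.

Lemma sum_cycle_flow c (P : pred E) :
  \sum_(e | P e) cycle_flow c e = \sum_(s <- c | P s.1) step_sign s.
Proof.
rewrite (exchange_big_dep xpredT) //= [RHS]big_mkcond /=; apply: eq_bigr => s _.
have [Ps|nPs] := boolP (P s.1).
  rewrite (big_pred1 s.1) // => e /=.
  by rewrite eq_sym; case: eqP => [->|]; rewrite ?Ps ?andbF.
by rewrite big_pred0 // => e; case: eqP => [<-|]; rewrite ?(negbTE nPs) ?andbF.
Qed.

Lemma walk_sign_balance a p b v : walk src dst a p b ->
  \sum_(s <- p | dst s.1 == v) step_sign s - \sum_(s <- p | src s.1 == v) step_sign s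
  = (b == v)%:R - (a == v)%:R.
Proof.
elim: p a => [|s p IH] a /=; first by move/eqP->; rewrite !big_nil !subrr.
case/andP=> /eqP <- /IH; rewrite !big_cons.
set X := \sum_(_ <- p | _) _; set Y := \sum_(_ <- p | _) _ => /(canRL (addrNK Y)) ->.
by case: s => e [] /=; rewrite /step_sign /step_tail /step_head /=;
  case: (dst e == v); case: (src e == v) => /=; ring.
Qed.

Lemma cycle_flow_conservation c a :
  walk src dst a c a -> flow_conservation (cycle_flow c).
Proof.
move=> W v; apply/eqP.
by rewrite !sum_cycle_flow -subr_eq0 (walk_sign_balance v W) subrr.
Qed.

Lemma cycle_flow_notin c e : e \notin map fst c -> cycle_flow c e = 0.
Proof.
move=> e_notin; rewrite /cycle_flow big_seq_cond big_pred0 // => s.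
by apply/andP => -[s_in /eqP s_e]; case/mapP: e_notin; exists s.
Qed.

Lemma cycle_flow_step c s : uniq (map fst c) -> s \in c -> cycle_flow c s.1 = step_sign s.
Proof.
elim: c => //= s0 c IH /andP[s0_new c_uniq]; rewrite inE /cycle_flow big_cons.
case/predU1P=> [->|s_in].
  by rewrite eqxx -/(cycle_flow c s0.1) (cycle_flow_notin s0_new) addr0.
have -> : (s0.1 == s.1) = false by apply: contraNF s0_new => /eqP->; apply: map_f.
exact: IH.
Qed.

Lemma cycle_flow_Rint c e : cycle_flow c e \in Rint.
Proof. by apply: rpred_sum => s _; rewrite /step_sign; case: ifP; rewrite ?rpredN rpred1. Qed.

Lemma sum_cond_natr (g : E -> R) (P : pred E) :
  \sum_(f | P f) g f = \sum_f (P f)%:R * g f.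
Proof. by rewrite big_mkcond; apply: eq_bigr => f _; case: (P f); rewrite ?mul1r ?mul0r. Qed.

(* Conservation at v makes the flow on e an integer combination of the flows
   on the other edges at v. *)
Lemma nonintegral_flow_branches (g : E -> R) v e :
  flow_conservation g -> g e \notin Rint -> src e != dst e -> incident src dst e v ->
  exists f, [/\ g f \notin Rint, f != e & incident src dst f v].
Proof.
move=> Cg ge_nonint e_loopless e_at.
have [/existsP[f /and3P[gf_nonint f_ne f_at]]|/existsPn others_int] :=
  boolP [exists f, [&& g f \notin Rint, f != e & incident src dst f v]]; first by exists f.
case/negP: ge_nonint.
have e_term_int : ((dst e == v)%:R - (src e == v)%:R) * g e \in Rint.
  have := Cg v; rewrite (sum_cond_natr _ (fun f => dst f == v)).
  rewrite (sum_cond_natr _ (fun f => src f == v)) => /eqP.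
  rewrite -subr_eq0 -sumrB (bigD1 e) //= addr_eq0 => /eqP e_term.
  rewrite mulrBl e_term rpredN.
  apply: rpred_sum => f f_ne; rewrite -mulrBl.
  have [f_at|f_off] := boolP (incident src dst f v).
    rewrite rpredM ?rpredB ?rpred_nat //.
    by move: (others_int f); rewrite f_ne f_at !andbT negbK.
  by move: f_off; rewrite negb_or => /andP[/negbTE-> /negbTE->]; rewrite subrr mul0r rpred0.
have dst_src : (dst e == src e) = false by rewrite eq_sym (negbTE e_loopless).
move: e_term_int; case/orP: e_at => /eqP <-; rewrite eqxx ?dst_src ?(negbTE e_loopless).
  by rewrite sub0r mulN1r rpredN.
by rewrite subr0 mul1r.
Qed.

Lemma acyclic_flow_Rint (F : {set E}) (g : E -> R) :
  flow_conservation g -> uacyclic src dst F ->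
  (forall f, f \notin F -> g f \in Rint) -> forall f, g f \in Rint.
Proof.
move=> Cg F_acyclic off_F_int f; apply: contraT => gf_nonint.
have [w w_cycle] : exists w, ucycle_in src dst [set f | g f \notin Rint] w.
  apply: find_ucycle; first by exists f; rewrite inE.
  move=> v e; rewrite inE => ge_nonint e_loopless e_at.
  have [f' [gf'_nonint f'_ne f'_at]] := nonintegral_flow_branches Cg ge_nonint e_loopless e_at.
  by exists f'; rewrite inE.
case: (F_acyclic w); apply: ucycle_in_subset w_cycle => e; rewrite inE.
by apply: contraR; apply: off_F_int.
Qed.

End Circulations.

Unset Implicit Arguments.

Theorem lemma3 (R : realFieldType) (V E : finType) (src dst : E -> V)
    (u : E -> nat) (c : E -> int) (b : E -> nat) (B : nat)
    (L T U : {set E}) (ebar : E) (x : E -> R) :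
  basis_structure src dst b L T U ebar ->
  basic_solution src dst u b B L U x ->
  feasible u x ->
  forall cyc : seq (E * bool), fund_cycle src dst T ebar cyc ->
  forall e : E, e \in map fst cyc -> forall n : nat, x e != n%:R.
Proof.
move=> [_ LTU [_ T_acyclic] _] [x_flow x_L x_U x_fee] _ cyc.
move=> [[_ cyc_edges [a cyc_walk] cyc_uniq _] ebar_in] e e_in n; apply/eqP => x_e.
pose k := x ebar; pose g f := x f - k * cycle_flow cyc f.
have g_flow : flow_conservation src dst g.
  exact: flow_conservationB_scale x_flow (cycle_flow_conservation cyc_walk).
have g_off_T f : f \notin T -> g f \in Rint.
  move=> fT; have [->|f_ebar] := eqVneq f ebar.
    by rewrite /g (cycle_flow_step cyc_uniq ebar_in) mulr1 subrr rpred0.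
  have f_off_cyc : f \notin map fst cyc.
    apply/mapP => -[s s_in f_s]; move/allP/(_ s s_in): cyc_edges.
    by rewrite -f_s !inE (negbTE f_ebar) (negbTE fT).
  have : f \in L :|: T :|: U by rewrite LTU !inE f_ebar.
  rewrite /g (cycle_flow_notin f_off_cyc) mulr0 subr0 !inE (negbTE fT) orbF.
  by case/orP=> [/x_L->|/x_U->]; rewrite ?rpred0 ?rpred_nat.
have g_int := acyclic_flow_Rint g_flow T_acyclic g_off_T.
have k_int : k \in Rint.
  have [s s_in e_s] := mapP e_in.
  have sign_s := cycle_flow_step cyc_uniq s_in; rewrite -e_s in sign_s.
  have -> : k = (n%:R - g e) * step_sign s.
    by rewrite -x_e /g sign_s /step_sign; case: s.2; ring.
  by rewrite -sign_s rpredM ?cycle_flow_Rint // rpredB ?rpred_nat ?g_int.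
have x_int f : x f \in Rint.
  by rewrite -[x f](subrK (k * cycle_flow cyc f)) rpredD ?rpredM ?g_int ?cycle_flow_Rint.
apply: (negP (half_Rint R)); rewrite -(addKr B%:R 2^-1) -x_fee.
by rewrite rpredD ?rpredN ?rpred_nat // rpred_sum // => f _; rewrite rpredM ?rpred_nat.
Qed.
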